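(* Let $C=U_d\cdots U_1$ be a depth-$d$ circuit of nearest-neighbor two-qubit Clifford gates on $n$ qubits located at the sites of a $D$-dimensional lattice, with $C_t=U_t\cdots U_1$. Let $b$ be a random error configuration in which each of the $nd$ noise locations $(i,t)$ (qubit $i$, after layer $t$) is independently selected with probability $\gamma$, and let $M_b$ be the set of Pauli operators $C_t^\dagger X_iC_t$, $C_t^\dagger Z_iC_t$ over selected locations $(i,t)$. Define $\Pi_{M_b}=\bigcirc_{P\in M_b}\Pi_P$ where $\Pi_P(\sigma)=\frac12\sigma+\frac12P\sigma P^\dagger$. Partition the lattice into hypercubic sublattices of side length $2d$, let $G$ be the graph on sublattices with adjacency including diagonal neighbors, and let $T_k$ be the set of phaseless Pauli operators whose support is contained within some connected set of $k$ sublattices of $G$ and meets at least $k/2$ sublattices within it. Then there exists a depth threshold $d^*_{local}\le O(\gamma^{-1}3^{2D}+\gamma^{-1}D\log(\gamma^{-1}D))$ such that for $d>d^*_{local}$, $$\mathbf P_b\Big(\bigcup_{s\in T_k}\{\Pi_{M_b}(s)\neq0\}\Big)\le nd\,e^{-k}.$$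
   Context: For a phaseless Pauli $s$, $\Pi_{M_b}(s)=s$ if $s$ commutes with every element of $M_b$ and $\Pi_{M_b}(s)=0$ otherwise. The support of a Pauli operator is the set of qubits on which it acts non-trivially. *)

From HB Require Import structures.
From mathcomp Require Import all_boot all_order all_algebra.
From mathcomp Require Import reals sequences exp.
Set Implicit Arguments. Unset Strict Implicit. Unset Printing Implicit Defensive.
Import Order.TTheory GRing.Theory Num.Theory.

Definition site (D L : nat) := {ffun 'I_D -> 'I_L}.

Definition lat_adj D L (x y : site D L) : bool :=
  (\sum_(a < D) ((x a - y a) + (y a - x a)))%N == 1%N.

(* a single-qubit phaseless Pauli is (x-bit, z-bit): I=(0,0) X=(1,0) Z=(0,1) Y=(1,1) *)
Definition pauli (D L : nat) := {ffun site D L -> bool * bool}.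

Definition support D L (s : pauli D L) : {set site D L} :=
  [set i | s i != (false, false)].

Definition anti1 (p q : bool * bool) : bool := (p.1 && q.2) (+) (p.2 && q.1).

Definition commute D L (s t : pauli D L) : bool :=
  ~~ odd #|[set i | anti1 (s i) (t i)]|.

Definition pX D L (i : site D L) : pauli D L :=
  [ffun j => if j == i then (true, false) else (false, false)].
Definition pZ D L (i : site D L) : pauli D L :=
  [ffun j => if j == i then (false, true) else (false, false)].

(* A two-qubit Clifford U is represented (modulo phases, which are irrelevant
   for conjugation) by its Heisenberg action  P |-> U^dagger P U  on two-qubit
   phaseless Paulis: an F_2-linear map preserving the symplectic form.
   (Cliffords mod Paulis/phases <-> Sp(4,F_2).) *)
Definition pauli2 := ((bool * bool) * (bool * bool))%type.
Definition xor1 (p q : bool * bool) := (p.1 (+) q.1, p.2 (+) q.2).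
Definition xor2 (p q : pauli2) : pauli2 := (xor1 p.1 q.1, xor1 p.2 q.2).
Definition anti2 (p q : pauli2) : bool := anti1 p.1 q.1 (+) anti1 p.2 q.2.

Record clifford2 := Clifford2 {
  cl_act :> pauli2 -> pauli2;
  cl_lin : forall p q, cl_act (xor2 p q) = xor2 (cl_act p) (cl_act q);
  cl_symp : forall p q, anti2 (cl_act p) (cl_act q) = anti2 p q
}.

Definition gate D L := (site D L * site D L * clifford2)%type.

Definition apply_gate D L (g : gate D L) (s : pauli D L) : pauli D L :=
  let: (i, j, U) := g in
  let: r := U (s i, s j) in
  [ffun k => if k == i then r.1 else if k == j then r.2 else s k].

Definition layer D L := seq (gate D L).

Definition layer_ok D L (U : layer D L) : bool :=
  all (fun g => lat_adj g.1.1 g.1.2) U &&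
  uniq (flatten [seq [:: g.1.1; g.1.2] | g <- U]).

(* Heisenberg action of a whole layer (gates commute, being disjoint) *)
Definition apply_layer D L (U : layer D L) (s : pauli D L) : pauli D L :=
  foldr (@apply_gate D L) s U.

(* Circuit C = U_d ... U_1 given as the list [:: U_1; ...; U_d].
   heis Us t P = C_t^dagger P C_t  with  C_t = U_t ... U_1,
   i.e. apply U_t^dag . U_t first, ..., U_1^dag . U_1 last. *)
Definition heis D L (Us : seq (layer D L)) (t : nat) (P : pauli D L) : pauli D L :=
  foldr (@apply_layer D L) P (take t Us).

(* noise locations (i,t), t : 'I_d standing for "after layer t.+1" *)
Definition M_b D L d (Us : seq (layer D L)) (b : {set site D L * 'I_d})
  : {set pauli D L} :=
  [set P | [exists l in b, (P == heis Us l.2.+1 (pX l.1))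
                        || (P == heis Us l.2.+1 (pZ l.1))]].

(* Pi_M applied to a phaseless Pauli s: s if s commutes with every element of
   M, and 0 (encoded as None) otherwise. *)
Definition Pi_M D L (M : {set pauli D L}) (s : pauli D L) : option (pauli D L) :=
  if [forall P in M, commute s P] then Some s else None.

Definition cell_idx D L (d : nat) (x : site D L) : 'I_D -> nat :=
  fun a => (x a %/ (2 * d))%N.

Definition sublat D L d (x : site D L) : {set site D L} :=
  [set y | [forall a, cell_idx d y a == cell_idx d x a]].

Definition sublats D L d : {set {set site D L}} := [set sublat d x | x : site D L].

Definition G_adj D L d (A B : {set site D L}) : bool :=
  (A != B) &&
  [exists x in A, exists y in B, [forall a,
     ((cell_idx d x a - cell_idx d y a) + (cell_idx d y a - cell_idx d x a) <= 1)%N]].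

Definition G_connected D L d (S : {set {set site D L}}) : bool :=
  (S \subset sublats D L d) &&
  [forall A in S, forall B in S,
     connect (fun U V => [&& U \in S, V \in S & G_adj d U V]) A B].

Definition in_T D L d (k : nat) (s : pauli D L) : bool :=
  [exists S : {set {set site D L}},
    [&& G_connected d S, #|S| == k,
        [forall i in support s, sublat d i \in S] &
        (k <= 2 * #|[set A in S | [exists i in support s, i \in A]]|)%N]].

Definition prob_b (R : realType) D L d (gamma : R)
  (E : {set site D L * 'I_d} -> bool) : R :=
  \sum_(b : {set site D L * 'I_d})
     (if E b then gamma ^+ #|b| * (1 - gamma) ^+ (#|site D L| * d - #|b|)
      else 0).

(* Pull a Pauli s back through the circuit: an error at (i, t) kills s as soon
   as i lies in the support of u_t = C_t s C_t^dagger, so s survives with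
   probability at most
     (1 - gamma)^(sum_t |supp u_t|) <= sum_t ((1 - gamma)^d)^|supp u_t|.
   Nearest-neighbour layers spread supports by one site per coordinate, so if s
   lies in T_k, witnessed by a connected set S of k cells of side 2d, then every
   u_t is supported in the cells touching S and has at least k / (2 3^D)
   sites.  A connected set of k cells is determined by a starting site and a
   walk of 2k steps in {-1,0,1}^D, so there are at most n 9^(D k) of them.
   Weighting each of them by theta^-k, theta = 9^D e^2, and summing over the
   Paulis supported near it (a Peierls argument) bounds the contribution of
   each layer by n e^-k, provided 3 theta^(2 3^D) (1 - gamma)^d (6d + 1)^D <= 1;
   this holds once d > 32 gamma^-1 (9^D + D ln (D / gamma)). *)

From Pilot Require Import Defs.
From HB Require Import structures.
From mathcomp Require Import all_boot all_order all_algebra.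
From mathcomp Require Import reals sequences exp.
From mathcomp Require Import zify ring lra.
Import Order.TTheory GRing.Theory Num.Theory.
(* Otherwise [commute] would refer to fingroup's. *)
Import Pilot.Defs.
Set Implicit Arguments. Unset Strict Implicit. Unset Printing Implicit Defensive.

Section Pauli.
Variables D L : nat.
Local Notation site := (site D L).
Local Notation pauli := (pauli D L).
Local Notation p0 := (false, false).

Lemma anti1p0 p : anti1 p p0 = false.
Proof. by case: p => [[] []]. Qed.

Lemma odd_card_set (T : finType) (f : T -> bool) :
  odd #|[set i | f i]| = \big[addb/false]_i f i.
Proof.
rewrite -sum1_card big_mkcond /= (big_morph odd oddD (erefl (odd 0))).
by apply: eq_bigr => i _; rewrite inE; case: (f i).
Qed.

Lemma commuteE (s t : pauli) :
  commute s t = ~~ \big[addb/false]_i anti1 (s i) (t i).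
Proof. by rewrite /commute odd_card_set. Qed.

Lemma commute_pX (u : pauli) i : commute u (pX i) = ~~ (u i).2.
Proof.
rewrite commuteE (bigD1 i) //= big1 ?addbF => [|x xi]; rewrite ffunE.
  by rewrite eqxx; case: (u i) => [[] []].
by rewrite (negbTE xi) anti1p0.
Qed.

Lemma commute_pZ (u : pauli) i : commute u (pZ i) = ~~ (u i).1.
Proof.
rewrite commuteE (bigD1 i) //= big1 ?addbF => [|x xi]; rewrite ffunE.
  by rewrite eqxx; case: (u i) => [[] []].
by rewrite (negbTE xi) anti1p0.
Qed.

Lemma clifford2_0 (U : clifford2) : U (p0, p0) = (p0, p0).
Proof.
have := cl_lin U (p0, p0) (p0, p0).
by case: (U (p0, p0)) => [[[] []] [[] []]].
Qed.

(* The symplectic form on two-qubit Paulis is nondegenerate. *)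
Lemma clifford2_inj (U : clifford2) : injective U.
Proof.
move=> p q Upq.
have anti_pq r : anti2 (xor2 p q) r = false.
  rewrite -(cl_symp U) cl_lin Upq.
  by case: (U q) (U r) => [[[] []] [[] []]] [[[] []] [[] []]].
have : xor2 p q = (p0, p0).
  move: (anti_pq ((false, true), p0)) (anti_pq ((true, false), p0)).
  move: (anti_pq (p0, (false, true))) (anti_pq (p0, (true, false))).
  by case: (xor2 p q) => [[[] []] [[] []]].
by move: p q {Upq anti_pq} => [[[] []] [[] []]] [[[] []] [[] []]].
Qed.

Section Gate.
Variables (i j : site) (U : clifford2).
Hypothesis neq_ij : i != j.

Lemma apply_gate_commute (s t : pauli) :
  commute (apply_gate (i, j, U) s) (apply_gate (i, j, U) t) = commute s t.
Proof.
have bigD2 (f : site -> bool) : \big[addb/false]_x f x =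
    f i (+) f j (+) \big[addb/false]_(x | (x != i) && (x != j)) f x.
  by rewrite (bigD1 i) //= (bigD1 j) 1?eq_sym //= addbA.
rewrite !commuteE bigD2 [in RHS]bigD2 /= !ffunE eqxx [j == i]eq_sym (negbTE neq_ij) eqxx.
congr (~~ (_ (+) _)).
  have := cl_symp U (s i, s j) (t i, t j); rewrite /anti2 /= => <-.
  by case: (U (s i, s j)) (U (t i, t j)).
by apply: eq_bigr => x /andP [xi xj]; rewrite !ffunE (negbTE xi) (negbTE xj).
Qed.

Lemma apply_gate_inj : injective (apply_gate (i, j, U)).
Proof.
move=> s t st.
have st_at k : apply_gate (i, j, U) s k = apply_gate (i, j, U) t k by rewrite st.
have := st_at i; have := st_at j.
rewrite /= !ffunE eqxx eq_sym (negbTE neq_ij) eqxx => tj ti.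
have /clifford2_inj [si sj] : U (s i, s j) = U (t i, t j).
  by move: ti tj; case: (U (s i, s j)) (U (t i, t j)) => a b [c e] /= -> ->.
apply/ffunP => k; have := st_at k; rewrite /= !ffunE.
by case: eqP => [->|_]; [rewrite si | case: eqP => [->|_]].
Qed.

Lemma apply_gate_support (s : pauli) x : apply_gate (i, j, U) s x != p0 ->
  exists2 y, s y != p0 & (y == x) || (x \in [:: i; j]) && (y \in [:: i; j]).
Proof.
have U0 : (s i, s j) = (p0, p0) -> U (s i, s j) = (p0, p0).
  by move=> ->; apply: clifford2_0.
have pair_support z : z \in [:: i; j] -> (s i, s j) != (p0, p0) ->
    exists2 y, s y != p0 & (y == z) || (z \in [:: i; j]) && (y \in [:: i; j]).
  by move=> zij; rewrite xpair_eqE negb_and => /orP [si|sj];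
    [exists i | exists j]; rewrite // zij !inE eqxx /= ?orbT.
rewrite /= ffunE; case: (x =P i) => [->|_]; last case: (x =P j) => [->|_].
- move=> Ui; apply: pair_support; first by rewrite mem_head.
  by apply: contraNneq Ui => /U0 ->.
- move=> Uj; apply: pair_support; first by rewrite !inE eqxx orbT.
  by apply: contraNneq Uj => /U0 ->.
- by exists x; rewrite ?eqxx.
Qed.

End Gate.

Definition nearby (t : nat) (x y : site) :=
  [forall a, ((x a : nat) - y a <= t)%N && ((y a : nat) - x a <= t)%N].

Lemma nearbyP t (x y : site) :
  reflect (forall a, ((x a : nat) - y a <= t)%N /\ ((y a : nat) - x a <= t)%N)
          (nearby t x y).
Proof.
apply: (iffP forallP) => H a; first by case/andP: (H a).
by case: (H a) => -> ->.
Qed.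

Lemma nearby_refl t (x : site) : nearby t x x.
Proof. by apply/nearbyP => a; rewrite subnn. Qed.

Lemma nearby_sym t (x y : site) : nearby t x y = nearby t y x.
Proof. by apply/nearbyP/nearbyP => H a; case: (H a). Qed.

Lemma nearby_trans s t (x y z : site) :
  nearby s x y -> nearby t y z -> nearby (s + t) x z.
Proof.
move=> /nearbyP xy /nearbyP yz; apply/nearbyP => a.
by case: (xy a) (yz a) => ? ? [? ?]; lia.
Qed.

Lemma nearby_le s t (x y : site) : (s <= t)%N -> nearby s x y -> nearby t x y.
Proof. by move=> st /nearbyP xy; apply/nearbyP => a; case: (xy a); lia. Qed.

Lemma lat_adj_nearby (x y : site) : lat_adj x y -> nearby 1 x y.
Proof.
move=> /eqP xy; apply/nearbyP => a.
have : ((x a - y a) + (y a - x a) <= 1)%N by rewrite -xy (bigD1 a) //= leq_addr.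
lia.
Qed.

Lemma lat_adj_neq (x y : site) : lat_adj x y -> x != y.
Proof.
by apply: contraL => /eqP ->; rewrite /lat_adj big1 // => a _; rewrite subnn.
Qed.

Lemma noncommute_overlap (s t : pauli) :
  ~~ commute s t -> exists y, (s y != p0) && (t y != p0).
Proof.
rewrite commuteE negbK => st; apply/existsP; apply: contraLR st => /existsPn st.
rewrite big1 // => y _; move: (st y); rewrite negb_and !negbK.
by case/orP => /eqP ->; [case: (t y) => [[] []] | rewrite anti1p0].
Qed.

Definition layer_sites (U : layer D L) := flatten [seq [:: g.1.1; g.1.2] | g <- U].

Lemma layer_ok_consP i j V (U : layer D L) : layer_ok ((i, j, V) :: U) ->
  [/\ lat_adj i j, i \notin j :: layer_sites U, j \notin layer_sites U & layer_ok U].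
Proof.
by case/andP => /= /andP [-> allU] /and3P [-> -> uU]; rewrite /layer_ok allU uU.
Qed.

Lemma apply_layer_commute (U : layer D L) (s t : pauli) : layer_ok U ->
  commute (apply_layer U s) (apply_layer U t) = commute s t.
Proof.
elim: U => //= [[[i j] V] U IH] /layer_ok_consP [/lat_adj_neq ij _ _ okU].
by rewrite apply_gate_commute // IH.
Qed.

Lemma apply_layer_inj (U : layer D L) : layer_ok U -> injective (apply_layer U).
Proof.
elim: U => [_ s t //|[[i j] V] U IH] /layer_ok_consP [/lat_adj_neq ij _ _ okU].
by move=> s t /= /(apply_gate_inj ij) /(IH okU).
Qed.

Lemma apply_layer_notin (U : layer D L) (s : pauli) x :
  x \notin layer_sites U -> apply_layer U s x = s x.
Proof.
elim: U => //= [[[i j] V] U IH]; rewrite /layer_sites /= !inE !negb_or.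
by case/and3P => xi xj xU; rewrite ffunE (negbTE xi) (negbTE xj) IH.
Qed.

(* The gates of a layer act on disjoint nearest-neighbour pairs. *)
Lemma apply_layer_support (U : layer D L) (s : pauli) x : layer_ok U ->
  apply_layer U s x != p0 -> exists2 y, s y != p0 & nearby 1 y x.
Proof.
elim: U x => [|[[i j] V] U IH] x /=.
  by move=> _ sx; exists x => //; apply: nearby_refl.
case/layer_ok_consP => adj ni nj okU.
case/apply_gate_support => y sy /orP [/eqP <-|/andP [xij yij]]; first exact: IH.
have yU : y \notin layer_sites U.
  by move: yij ni; rewrite !inE => /orP [] /eqP -> //; rewrite negb_or => /andP [].
exists y; first by rewrite -(apply_layer_notin s yU).
move: xij yij; rewrite !inE => /orP [] /eqP -> /orP [] /eqP ->;
  first [exact: nearby_refl | exact: lat_adj_nearby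
        | rewrite nearby_sym; exact: lat_adj_nearby].
Qed.

Section Circuit.
Variable Ls : seq (layer D L).
Hypothesis okLs : all (@layer_ok D L) Ls.

Definition circuit_heis (P : pauli) := foldr (@apply_layer D L) P Ls.

Lemma circuit_heis_commute (s t : pauli) :
  commute (circuit_heis s) (circuit_heis t) = commute s t.
Proof.
rewrite /circuit_heis; elim: Ls okLs => //= U Ls' IH /andP [okU okLs'].
by rewrite apply_layer_commute // IH.
Qed.

Lemma circuit_heis_inj : injective circuit_heis.
Proof.
rewrite /circuit_heis; elim: Ls okLs => [_ s t //|U Ls' IH] /= /andP [okU okLs'].
by move=> s t /(apply_layer_inj okU) /(IH okLs').
Qed.

Lemma circuit_heis_support (P : pauli) y : circuit_heis P y != p0 ->
  exists2 x, P x != p0 & nearby (size Ls) x y.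
Proof.
rewrite /circuit_heis; elim: Ls okLs y => /= [_|U Ls' IH /andP [okU okLs']] y.
  by move=> Py; exists y => //; apply: nearby_refl.
case/(apply_layer_support okU) => z /(IH okLs') [x Px xz] zy.
by exists x; rewrite // -addn1; apply: nearby_trans zy.
Qed.

(* A single-site Pauli at x anticommuting with u is mapped into the light cone
   of x, and anticommutation is preserved. *)
Lemma support_circuit_heis (u : pauli) x : u x != p0 ->
  exists2 y, circuit_heis u y != p0 & nearby (size Ls) x y.
Proof.
move=> ux.
have [P [uP Px]] : exists P, ~~ commute u P /\ forall y, P y != p0 -> y = x.
  have single (p : bool * bool) y : [ffun z => if z == x then p else p0] y != p0 -> y = x.
    by rewrite ffunE; case: (y =P x) => // _; rewrite eqxx.
  case E: (u x) ux => [[] []] // _.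
  - by exists (pX x); rewrite commute_pX E; split => //; apply: (single (true, false)).
  - by exists (pZ x); rewrite commute_pZ E; split => //; apply: (single (false, true)).
  - by exists (pX x); rewrite commute_pX E; split => //; apply: (single (true, false)).
rewrite -circuit_heis_commute in uP.
case: (noncommute_overlap uP) => y /andP [uy Py]; exists y => //.
by case: (circuit_heis_support Py) => z /Px ->.
Qed.

End Circuit.

Lemma heisE (Us : seq (layer D L)) n : heis Us n = circuit_heis (take n Us).
Proof. by []. Qed.

End Pauli.

Lemma card_bigcup_leq (I T : finType) (A : {set I}) (F : I -> {set T}) :
  (#|\bigcup_(i in A) F i| <= \sum_(i in A) #|F i|)%N.
Proof.
elim/big_rec2: _ => [|i m U _ IH]; first by rewrite cards0.
by rewrite cardsU; lia.
Qed.

Lemma leq_imset_card_code (T U C : finType) (f : T -> U) (X : {set T}) (code : T -> C) :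
  {in X &, forall x x', code x = code x' -> f x = f x'} -> (#|f @: X| <= #|C|)%N.
Proof.
move=> f_code.
have [->|[x0 x0X]] := set_0Vmem X; first by rewrite imset0 cards0.
pose decode c := f (odflt x0 [pick x in X | code x == c]).
have sub : f @: X \subset decode @: (code @: X).
  apply/subsetP => _ /imsetP [x xX ->]; apply/imsetP; exists (code x); first exact: imset_f.
  rewrite /decode; case: pickP => [x' /andP [x'X /eqP e]|/(_ x)]; last by rewrite xX eqxx.
  by rewrite /= (f_code x' x).
by rewrite (leq_trans (subset_leq_card sub)) // (leq_trans (leq_imset_card _ _)) ?max_card.
Qed.

Section Cells.
Variables D L d : nat.
Local Notation site := (site D L).
Local Notation idx := (@cell_idx D L d).

Definition cells_touch (x y : site) :=
  [forall a, (idx x a <= idx y a + 1)%N && (idx y a <= idx x a + 1)%N].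

Lemma cells_touchP (x y : site) :
  reflect (forall a, (idx x a <= idx y a + 1)%N /\ (idx y a <= idx x a + 1)%N)
          (cells_touch x y).
Proof.
apply: (iffP forallP) => H a; first by case/andP: (H a).
by case: (H a) => -> ->.
Qed.

Lemma cells_touch_refl (x : site) : cells_touch x x.
Proof. by apply/cells_touchP => a; lia. Qed.

Lemma cells_touch_sym (x y : site) : cells_touch x y = cells_touch y x.
Proof. by apply/cells_touchP/cells_touchP => H a; case: (H a). Qed.

Lemma in_sublat (x y : site) : (y \in sublat d x) = [forall a, idx y a == idx x a].
Proof. by rewrite inE. Qed.

Lemma sublat_id (x : site) : x \in sublat d x.
Proof. by rewrite in_sublat; apply/forallP. Qed.

Lemma mem_sublat_idx (x y : site) : y \in sublat d x -> forall a, idx y a = idx x a.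
Proof. by rewrite in_sublat => /forallP H a; apply/eqP. Qed.

Lemma sublat_eq (x y : site) : (forall a, idx x a = idx y a) -> sublat d x = sublat d y.
Proof.
move=> xy; apply/setP => z; rewrite !in_sublat.
by apply/forallP/forallP => z_ a; rewrite (eqP (z_ a)) xy.
Qed.

Lemma mem_sublat_eq (x y : site) : y \in sublat d x -> sublat d y = sublat d x.
Proof. by move/mem_sublat_idx; apply: sublat_eq. Qed.

Lemma G_adj_cells_touch (x y : site) :
  G_adj d (sublat d x) (sublat d y) -> cells_touch x y.
Proof.
case/andP => _ /existsP [x' /andP [x'x /existsP [y' /andP [y'y /forallP x'y']]]].
apply/cells_touchP => a; move: (x'y' a).
by rewrite (mem_sublat_idx x'x) (mem_sublat_idx y'y); lia.
Qed.

Lemma card_touching_cells (y : site) (X : {set site}) :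
  {in X, forall x, cells_touch x y} -> (#|(fun x => sublat d x) @: X| <= 3 ^ D)%N.
Proof.
move=> Xy.
pose code (x : site) : {ffun 'I_D -> 'I_3} := [ffun a => inord (idx x a + 1 - idx y a)].
have := @leq_imset_card_code _ _ _ (fun x => sublat d x) X code.
rewrite card_ffun !card_ord; apply => x x' xX x'X /ffunP code_xx'.
apply: sublat_eq => a; move/(congr1 val): (code_xx' a); rewrite !ffunE.
move/cells_touchP: (Xy x xX) => /(_ a) [? ?]; move/cells_touchP: (Xy x' x'X) => /(_ a) [? ?].
by rewrite /= !inordK; lia.
Qed.

Hypothesis d_gt0 : (0 < d)%N.

Lemma nearby_cells_touch t (x y : site) :
  (t <= 2 * d)%N -> nearby t x y -> cells_touch x y.
Proof.
move=> td /nearbyP xy; apply/cells_touchP => a; case: (xy a) => ? ?.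
have d2 : (0 < 2 * d)%N by lia.
by rewrite /cell_idx; split; rewrite -(divnDMl _ _ d2) mul1n; apply: leq_div2r; lia.
Qed.

Lemma card_cells_touch (z : site) : (#|[set y | cells_touch z y]| <= (6 * d).+1 ^ D)%N.
Proof.
(* Each coordinate y a lies in the window [2d (idx z a - 1), 2d (idx z a + 2)). *)
pose code (y : site) : {ffun 'I_D -> 'I_(6 * d).+1} :=
  [ffun a => inord (y a + 2 * d - 2 * d * idx z a)].
have d2 : (0 < 2 * d)%N by lia.
have upper y a : cells_touch z y -> (y a < 2 * d * idx z a + 4 * d)%N.
  move/cells_touchP => /(_ a) [_ yz].
  have : (y a %/ (2 * d) < idx z a + 2)%N by rewrite /cell_idx in yz *; lia.
  by rewrite ltn_divLR //; nia.
have lower y a : cells_touch z y -> (2 * d * idx z a <= y a + 2 * d)%N.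
  move/cells_touchP => /(_ a) [zy _]; move: zy (leq_trunc_div (y a) (2 * d)).
  by rewrite /cell_idx; nia.
have := @leq_card_in _ _ code [set y | cells_touch z y].
rewrite card_ffun !card_ord; apply => y y'; rewrite !inE => zy zy' /ffunP code_yy'.
apply/ffunP => a; apply: val_inj; move/(congr1 val): (code_yy' a); rewrite !ffunE.
have := upper y a zy; have := upper y' a zy'; have := lower y a zy; have := lower y' a zy'.
by move=> ? ? ? ?; rewrite /= !inordK; lia.
Qed.

End Cells.

Lemma connect_cross (T : finType) (e : rel T) (C : {set T}) x y :
  connect e x y -> x \in C -> y \notin C ->
  exists u v, [/\ u \in C, v \notin C & e u v].
Proof.
case/connectP => p + ->; elim: p x => [|w p IH] x /=; first by move=> _ ->.
case/andP => exw pw xC; case wC: (w \in C); first exact: IH.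
by move=> _; exists x, w; rewrite wC.
Qed.

Section Animals.
Variables D L d : nat.
Local Notation site := (site D L).
Local Notation idx := (@cell_idx D L d).
Local Notation walk := (path (cells_touch d)).

Definition cells_of (s : seq site) : {set {set site}} := [set sublat d r | r in s].

Lemma cells_of_eq_mem (s1 s2 : seq site) : s1 =i s2 -> cells_of s1 = cells_of s2.
Proof.
by move=> s12; apply/setP => A; apply/imsetP/imsetP => -[r rs ->]; exists r;
  rewrite //; move: rs; rewrite s12.
Qed.

Lemma cells_of_cons (y : site) s : cells_of (y :: s) = sublat d y |: cells_of s.
Proof.
apply/setP => A; rewrite in_setU1; apply/imsetP/orP => [[r]|[/eqP ->|/imsetP [r rs ->]]].
- by rewrite inE => /orP [/eqP -> ->|rs ->]; [left | right; apply: imset_f].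
- by exists y; rewrite ?mem_head.
- by exists r; rewrite // inE rs orbT.
Qed.

(* A walk can be extended by a detour r -> z -> r to the cell of z adjacent to
   a visited cell r, so that it covers one more cell of S. *)
Lemma walk_extend (S : {set {set site}}) x q V :
  G_connected d S -> sublat d x \in S -> V \in S :\: cells_of (x :: q) -> walk x q ->
  exists W q', [/\ W \in S :\: cells_of (x :: q), walk x q',
    cells_of (x :: q') = W |: cells_of (x :: q) & size q' = (size q).+2].
Proof.
case/andP => Ssub /forall_inP Sconn xS; rewrite inE => /andP [Vq VS] wq.
have xq : sublat d x \in cells_of (x :: q) by apply: imset_f; rewrite mem_head.
have /forall_inP/(_ V VS)/connect_cross/(_ xq Vq) := Sconn _ xS.
case=> _ [W [/imsetP [r rq ->] Wq /and3P [_ WS rW]]].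
have [z _ Wz] := imsetP (subsetP Ssub W WS); rewrite Wz in rW.
have rz := G_adj_cells_touch rW.
case/splitPl: rq wq Wq => p1 p2 lastr wq Wq.
exists W, (p1 ++ z :: r :: p2); split.
- by rewrite inE Wq WS.
- move: wq; rewrite !cat_path /= lastr => /andP [w1 w2].
  by rewrite w1 w2 rz cells_touch_sym rz.
- rewrite Wz -cells_of_cons; apply: cells_of_eq_mem => y.
  have rin : r \in x :: p1 ++ p2 by rewrite -lastr -cat_cons mem_cat mem_last.
  move: rin; rewrite -!cat_cons !mem_cat !inE.
  case: (y =P r) => [->|_]; rewrite ?eqxx ?orbT /=.
    by case: (r == x) (r \in p1) (r \in p2) (r == z) => [] [] [] [].
  by case: (y == x) (y \in p1) (y \in p2) (y == z) => [] [] [] [].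
- by rewrite !size_cat /= !addnS.
Qed.

Lemma connected_cells_walk (S : {set {set site}}) x :
  G_connected d S -> sublat d x \in S ->
  exists q, [/\ walk x q, cells_of (x :: q) = S & (size q <= 2 * (#|S| - 1))%N].
Proof.
move=> Sc xS.
suff grow n q : #|S :\: cells_of (x :: q)| = n -> walk x q ->
    cells_of (x :: q) \subset S -> (size q <= 2 * (#|cells_of (x :: q)| - 1))%N ->
    exists q', [/\ walk x q', cells_of (x :: q') = S & (size q' <= 2 * (#|S| - 1))%N].
  apply: (grow _ [::] erefl) => //.
  by apply/subsetP => A /imsetP [r]; rewrite inE => /eqP -> ->.
elim: n q => [|n IH] q Sq wq qS sq.
  have qE : cells_of (x :: q) = S.
    by apply/eqP; rewrite eqEsubset qS -setD_eq0 -cards_eq0 Sq.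
  by exists q; rewrite -qE.
have [V VSq] : exists V, V \in S :\: cells_of (x :: q).
  by apply/set0Pn; rewrite -card_gt0 Sq.
have [W [q' [WSq wq' q'E sq']]] := walk_extend Sc xS VSq wq.
move: (WSq); rewrite inE => /andP [Wq WS].
apply: (IH q'); rewrite ?q'E //.
- by move: Sq; rewrite (cardsD1 W) WSq setUC -setDDl add1n => -[].
- by apply/subsetP => A; rewrite in_setU1 => /orP [/eqP ->|/(subsetP qS)].
- rewrite cardsU1 Wq sq'; move: sq.
  have : (0 < #|cells_of (x :: q)|)%N by apply/card_gt0P; exists (sublat d x); rewrite cells_of_cons setU11.
  lia.
Qed.

Definition animals k : {set {set {set site}}} := [set S | G_connected d S && (#|S| == k)].

(* A walk is encoded by its starting site and its sequence of cell steps in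
   {-1,0,1}^D, the step v ranging over 'I_3 and standing for v - 1. *)
Definition cell_vec (y : site) : {ffun 'I_D -> nat} := [ffun a => idx y a].

Definition cell_step (v : {ffun 'I_D -> nat}) (e : {ffun 'I_D -> 'I_3}) :
  {ffun 'I_D -> nat} := [ffun a => v a + e a - 1].

Definition step_code (r r' : site) : {ffun 'I_D -> 'I_3} :=
  [ffun a => inord (idx r' a + 1 - idx r a)].

Definition decode_walk l (c : site * l.-tuple {ffun 'I_D -> 'I_3}) : {set {set site}} :=
  [set sublat d y | y in
     [set y | cell_vec y \in cell_vec c.1 :: scanl cell_step (cell_vec c.1) c.2]].

Lemma step_codeK (r r' : site) :
  cells_touch d r r' -> cell_step (cell_vec r) (step_code r r') = cell_vec r'.
Proof.
move/cells_touchP => rr'; apply/ffunP => a; rewrite !ffunE.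
by case: (rr' a) => ? ?; rewrite inordK; lia.
Qed.

Lemma scanl_walk (x : site) q :
  walk x q -> scanl cell_step (cell_vec x) (pairmap step_code x q) = map cell_vec q.
Proof. by elim: q x => //= y q IH x /andP [xy wq]; rewrite step_codeK // IH. Qed.

Lemma decode_walkK l (x : site) q (size_q : size (pairmap step_code x q) == l) :
  walk x q -> decode_walk (x, Tuple size_q) = cells_of (x :: q).
Proof.
move=> wq; rewrite /decode_walk /= scanl_walk //; apply/setP => A.
apply/imsetP/imsetP => [[y]|[r rq ->]].
  rewrite inE -map_cons => /mapP [r rq yr] ->; exists r => //.
  by apply: sublat_eq => a; move/ffunP: yr => /(_ a); rewrite !ffunE.
by exists r => //; rewrite inE -map_cons map_f.
Qed.

Lemma card_animals k : (0 < k)%N ->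
  (#|animals k| <= #|{: site}| * 3 ^ (D * (2 * k)))%N.
Proof.
move=> k_gt0; set l := (2 * k)%N.
suff sub : animals k \subset [set decode_walk c | c : site * l.-tuple {ffun 'I_D -> 'I_3}].
  apply: leq_trans (subset_leq_card sub) _; apply: leq_trans (leq_imset_card _ _) _.
  by rewrite card_prod card_tuple !card_ffun !card_ord expnM.
apply/subsetP => S; rewrite inE => /andP [Sc /eqP Sk].
have [x xS] : exists x, sublat d x \in S.
  have [A AS] : exists A, A \in S by apply/set0Pn; rewrite -card_gt0 Sk.
  by case/andP: (Sc) => /subsetP /(_ A AS) /imsetP [x _ Ax] _; exists x; rewrite -Ax.
have [q [wq qS sq]] := connected_cells_walk Sc xS.
pose q' := q ++ nseq (l - size q) (last x q).
have wq' : walk x q'.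
  rewrite cat_path wq /=; elim: (l - size q)%N => //= m ->.
  by rewrite cells_touch_refl.
have size_q' : size (pairmap step_code x q') == l.
  by rewrite size_pairmap size_cat size_nseq; apply/eqP; move: sq; rewrite Sk /l; lia.
apply/imsetP; exists (x, Tuple size_q') => //; rewrite decode_walkK // -qS.
apply: cells_of_eq_mem => y; rewrite -cat_cons mem_cat mem_nseq.
by case: (y =P last x q) => [->|]; rewrite ?mem_last ?orbT ?andbF ?orbF.
Qed.

End Animals.

Arguments animals {D L} d k.

Local Open Scope ring_scope.

Section Bernoulli.
Variable R : realType.

Lemma prod_if_mem (T : finType) (b : {set T}) (a c : R) :
  \prod_(x : T) (if x \in b then a else c) = a ^+ #|b| * c ^+ (#|T| - #|b|).
Proof.
rewrite (bigID (mem b)) /= (eq_bigr (fun=> a)) => [|x -> //].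
rewrite [X in _ * X](eq_bigr (fun=> c)) => [|x /negbTE -> //].
rewrite !prodr_const; congr (_ * _ ^+ _).
by rewrite -(cardsC b) cardsE addKn.
Qed.

Lemma sum_bernoulli_disjoint (T : finType) (g : R) (F : {set T}) :
  \sum_(b : {set T})
    (if [disjoint b & F] then g ^+ #|b| * (1 - g) ^+ (#|T| - #|b|) else 0)
  = (1 - g) ^+ #|F|.
Proof.
pose f (x : T) (bx : bool) : R := if bx then (if x \in F then 0 else g) else 1 - g.
have prod_f (b : {set T}) :
    (if [disjoint b & F] then g ^+ #|b| * (1 - g) ^+ (#|T| - #|b|) else 0)
    = \prod_x f x (x \in b).
  case: ifP => [bF|/negbT/pred0Pn [x /andP [xb xF]]]; last first.
    have [xb' xF'] : x \in b /\ x \in F by [].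
    by rewrite (bigD1 x) //= /f xb' xF' mul0r.
  rewrite -prod_if_mem; apply: eq_bigr => x _; rewrite /f.
  by case: ifP => // xb; case: ifP => // xF; move/disjointFr: bF => /(_ x xb); rewrite xF.
rewrite (eq_bigr _ (fun b _ => prod_f b)).
rewrite (reindex (fun h : {ffun T -> bool} => [set x | h x])) /=; last first.
  exists (fun b : {set T} => [ffun x => x \in b]) => h _.
    by apply/ffunP => x; rewrite ffunE inE.
  by apply/setP => x; rewrite inE ffunE.
under eq_bigr do under eq_bigr do rewrite inE.
rewrite -(bigA_distr_bigA f) (eq_bigr (fun x => if x \in F then 1 - g else 1)).
  by rewrite -big_mkcond /= prodr_const.
by move=> x _; rewrite big_bool /f; case: (x \in F) => /=; ring.
Qed.

Lemma sum_pauli_supported D L (V : {set site D L}) (z : R) :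
  \sum_(u : pauli D L) (if support u \subset V then z ^+ #|support u| else 0)
  = (1 + 3%:R * z) ^+ #|V|.
Proof.
pose f (i : site D L) (p : bool * bool) : R :=
  if p == (false, false) then 1 else if i \in V then z else 0.
have prod_f (u : pauli D L) :
    (if support u \subset V then z ^+ #|support u| else 0) = \prod_i f i (u i).
  case: ifP => [uV|/negbT/subsetPn [i iu iV]]; last first.
    by rewrite (bigD1 i) //= /f; move: iu; rewrite inE => /negbTE ->; rewrite (negbTE iV) mul0r.
  rewrite -prodr_const [RHS](bigID (mem (support u))) /= [X in _ = _ * X]big1 ?mulr1.
    apply: eq_bigr => i iu; rewrite /f; move: (iu); rewrite inE => /negbTE ->.
    by rewrite (subsetP uV i iu).
  by move=> i; rewrite inE negbK /f => ->.
rewrite (eq_bigr _ (fun u _ => prod_f u)) -(bigA_distr_bigA f).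
rewrite (eq_bigr (fun i => if i \in V then 1 + 3%:R * z else 1)).
  by rewrite -big_mkcond /= prodr_const.
move=> i _; rewrite -(pair_big xpredT xpredT (fun a b => f i (a, b))) /=.
by rewrite !big_bool /f /=; case: (i \in V) => /=; ring.
Qed.

End Bernoulli.

Section Theta.
Variables (R : realType) (D : nat).

(* Each animal of k cells is weighted by theta^-k: this pays for the 9^(D k)
   animals and for the factor e^k of the Pauli sum, leaving e^-k. *)
Definition theta : R := 3%:R ^+ (2 * D) * expR 2.

Lemma theta_ge1 : 1 <= theta.
Proof.
rewrite -[1](mulr1 1) ler_pM // ?exprn_ege1 ?ler1n //.
by rewrite ltW // expR_gt1.
Qed.

Lemma card_animals_theta k :
  (3 ^ (D * (2 * k)))%:R * (expR k%:R / theta ^+ k) = expR (- k%:R).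
Proof.
have -> : (D * (2 * k) = 2 * D * k)%N by lia.
rewrite /theta exprMn natrX exprM.
set a := (3%:R ^+ (2 * D) : R) ^+ k.
have a0 : a != 0 by rewrite !expf_neq0 // pnatr_eq0.
have e0 : expR 2 ^+ k != 0 :> R by rewrite expf_neq0 // gt_eqF // expR_gt0.
rewrite invfM (_ : a * (expR k%:R * (a^-1 / expR 2 ^+ k)) = expR k%:R / expR 2 ^+ k).
  by rewrite -expRM_natl -expRB; congr expR; ring.
by field; apply/andP.
Qed.

End Theta.

Section Peierls.
Variables D L d : nat.
Hypothesis d_gt0 : (0 < d)%N.
Local Notation site := (site D L).
Local Notation pauli := (pauli D L).
Local Notation p0 := (false, false).
Variable phi : pauli -> pauli.
Hypothesis phi_support :
  forall (P : pauli) y, phi P y != p0 -> exists2 z, P z != p0 & nearby d z y.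
Hypothesis support_phi :
  forall (u : pauli) z, u z != p0 -> exists2 y, phi u y != p0 & nearby d z y.

Definition cell_nbhd (A : {set site}) : {set site} :=
  [set y | [exists z in A, cells_touch d z y]].

Definition animal_nbhd (S : {set {set site}}) : {set site} :=
  \bigcup_(A in S) cell_nbhd A.

Lemma card_cell_nbhd (A : {set site}) :
  A \in sublats D L d -> (#|cell_nbhd A| <= (6 * d).+1 ^ D)%N.
Proof.
case/imsetP => z0 _ ->; apply: leq_trans (card_cells_touch d_gt0 z0).
apply/subset_leq_card/subsetP => y; rewrite !inE => /existsP [z /andP [zA /cells_touchP zy]].
by apply/cells_touchP => a; rewrite -(mem_sublat_idx zA a).
Qed.

Lemma card_animal_nbhd (S : {set {set site}}) :
  S \subset sublats D L d -> (#|animal_nbhd S| <= #|S| * (6 * d).+1 ^ D)%N.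
Proof.
move/subsetP => Ssub; apply: leq_trans (card_bigcup_leq _ _) _.
by rewrite -sum_nat_const; apply: leq_sum => A AS; apply: card_cell_nbhd (Ssub A AS).
Qed.

Lemma nearby_d_cells_touch (x y : site) : nearby d x y -> cells_touch d x y.
Proof. by apply: nearby_cells_touch; rewrite // leq_pmull. Qed.

Lemma support_sub_animal_nbhd (u : pauli) (S : {set {set site}}) :
  {in support (phi u), forall i, sublat d i \in S} ->
  support u \subset animal_nbhd S.
Proof.
move=> S_phi_u; apply/subsetP => y; rewrite inE => /support_phi [x xu yx].
apply/bigcupP; exists (sublat d x); first by apply: S_phi_u; rewrite inE.
rewrite inE; apply/existsP; exists x; rewrite sublat_id cells_touch_sym.
exact: nearby_d_cells_touch.
Qed.

Lemma card_cells_met (u : pauli) (S : {set {set site}}) :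
  S \subset sublats D L d ->
  (#|[set A in S | [exists i in support (phi u), i \in A]]| <= 3 ^ D * #|support u|)%N.
Proof.
move=> Ssub.
have met_sub : [set A in S | [exists i in support (phi u), i \in A]] \subset
    \bigcup_(y in support u) ((fun x => sublat d x) @: [set x | cells_touch d x y]).
  apply/subsetP => A; rewrite inE => /andP [AS /exists_inP [i iu iA]].
  have [z _ Az] := imsetP (subsetP Ssub A AS).
  move: iu; rewrite inE => /phi_support [y uy yi].
  apply/bigcupP; exists y; first by rewrite inE.
  apply/imsetP; exists i; first by rewrite inE cells_touch_sym nearby_d_cells_touch.
  by rewrite Az (mem_sublat_eq (_ : i \in sublat d z)) // -Az.
apply: leq_trans (subset_leq_card met_sub) _; apply: leq_trans (card_bigcup_leq _ _) _.
rewrite mulnC -sum_nat_const; apply: leq_sum => y _.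
by apply: (@card_touching_cells _ _ _ y) => x; rewrite inE.
Qed.

Lemma in_T_light_cone (u : pauli) k : in_T d k (phi u) ->
  exists2 S, S \in animals d k &
    support u \subset animal_nbhd S /\ (k <= 2 * 3 ^ D * #|support u|)%N.
Proof.
case/existsP => S /and4P [Sc /eqP Sk /forall_inP S_phi_u k_met].
have Ssub : S \subset sublats D L d by case/andP: Sc.
exists S; first by rewrite inE Sc Sk eqxx.
split; first exact: support_sub_animal_nbhd.
by apply: leq_trans k_met _; rewrite -mulnA leq_mul2l card_cells_met.
Qed.

Variable R : realType.
Local Notation theta := (theta R D).
Local Notation M := (2 * 3 ^ D)%N.

Lemma in_T_weight_le k (x : R) (u : pauli) : 0 <= x -> in_T d k (phi u) ->
  x ^+ #|support u| <= \sum_(S in animals d k)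
    (if support u \subset animal_nbhd S
     then theta ^- k * (theta ^+ M * x) ^+ #|support u| else 0).
Proof.
move=> x0 /in_T_light_cone [S Sk [uS k_le]].
have th1 := theta_ge1 R D; have th0 : 0 <= theta by apply: le_trans th1.
have w0 n : 0 <= theta ^- k * (theta ^+ M * x) ^+ n.
  by rewrite mulr_ge0 // ?invr_ge0 exprn_ge0 // mulr_ge0 // exprn_ge0.
rewrite (bigD1 S) //= uS; apply: ler_wpDr.
  by apply: sumr_ge0 => S' _; case: ifP.
rewrite [(_ * x) ^+ _]exprMn -exprM mulrA ler_peMl ?exprn_ge0 // mulrC.
rewrite ler_pdivlMr ?exprn_gt0 ?(lt_le_trans ltr01) // mul1r.
exact: ler_weXn2l.
Qed.

Lemma sum_animal_nbhd_le k (z : R) S : S \in animals d k -> 0 <= z ->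
  3%:R * z * ((6 * d).+1 ^ D)%:R <= 1 ->
  \sum_(u : pauli) (if support u \subset animal_nbhd S then z ^+ #|support u| else 0)
    <= expR k%:R.
Proof.
rewrite inE => /andP [/andP [Ssub _] /eqP Sk] z0 small_z.
rewrite sum_pauli_supported; apply: le_trans (_ : expR (3%:R * z) ^+ #|animal_nbhd S| <= _).
  by rewrite lerXn2r ?nnegrE ?expR_ge1Dx ?addr_ge0 ?mulr_ge0 ?expR_ge0.
rewrite -expRM_natl ler_expR.
have : (#|animal_nbhd S|%:R <= k%:R * ((6 * d).+1 ^ D)%:R :> R).
  by rewrite -natrM ler_nat -Sk card_animal_nbhd.
move: small_z; set B := (((6 * d).+1 ^ D)%:R : R); set c := 3%:R * z.
have c0 : 0 <= c by rewrite mulr_ge0.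
have B0 : 0 <= B by [].
have k0 : 0 <= (k%:R : R) by [].
nra.
Qed.

Lemma sum_in_T_le k (x : R) : (0 < k)%N -> 0 <= x ->
  3%:R * theta ^+ M * x * ((6 * d).+1 ^ D)%:R <= 1 ->
  \sum_(u : pauli) (if in_T d k (phi u) then x ^+ #|support u| else 0)
    <= #|{: site}|%:R * expR (- k%:R).
Proof.
move=> k_gt0 x0 small_x.
have th0 : 0 < theta by apply: lt_le_trans (theta_ge1 R D).
set z := theta ^+ M * x.
have z0 : 0 <= z by rewrite mulr_ge0 // exprn_ge0 // ltW.
have w0 n : 0 <= theta ^- k * z ^+ n by rewrite mulr_ge0 // ?invr_ge0 exprn_ge0 // ltW.
apply: le_trans (_ : \sum_(u : pauli) \sum_(S in animals d k)
  (if support u \subset animal_nbhd S then theta ^- k * z ^+ #|support u| else 0) <= _).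
  apply: ler_sum => u _; case: ifP => [|_]; first exact: in_T_weight_le.
  by apply: sumr_ge0 => S _; case: ifP.
rewrite exchange_big /=.
apply: le_trans (_ : \sum_(S in animals d k) theta ^- k * expR k%:R <= _).
  apply: ler_sum => S Sk; rewrite (eq_bigr (fun u => theta ^- k *
    (if support u \subset animal_nbhd S then z ^+ #|support u| else 0))); last first.
    by move=> u _; case: ifP; rewrite ?mulr0.
  rewrite -mulr_sumr; apply: ler_wpM2l; first by rewrite invr_ge0 exprn_ge0 // ltW.
  by apply: sum_animal_nbhd_le; rewrite // mulrA.
rewrite sumr_const mulrC -(mulr_natl (expR k%:R / theta ^+ k)).
apply: le_trans (_ : (#|{: site}| * 3 ^ (D * (2 * k)))%:R * (expR k%:R / theta ^+ k) <= _).
  apply: ler_wpM2r; last by rewrite ler_nat card_animals.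
  by rewrite mulr_ge0 ?expR_ge0 // invr_ge0 exprn_ge0 // ltW.
by rewrite natrM -mulrA card_animals_theta.
Qed.

End Peierls.

Section Threshold.
Variable R : realType.

Lemma expR2_ge3 : 3%:R <= expR 2 :> R.
Proof. by have := expR_ge1Dx (2 : R); rewrite (_ : 1 + 2 = 3%:R). Qed.

Lemma theta_le_expR D : theta R D <= expR (4 * D + 2)%:R.
Proof.
rewrite natrD expRD /theta ler_wpM2r ?expR_ge0 // (_ : 4 * D = 2 * D * 2)%N; last lia.
rewrite natrM expRM_natl.
by rewrite lerXn2r ?nnegrE ?expR_ge0 ?expR2_ge3.
Qed.

Lemma pow1B_le_expR (g : R) n : g <= 1 -> (1 - g) ^+ n <= expR (- (g * n%:R)).
Proof.
move=> g1; rewrite mulrC -mulrN expRM_natl lerXn2r ?nnegrE ?expR_ge0 ?subr_ge0 //.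
exact: expR_ge1Dx.
Qed.

Lemma ln_56_le : ln (56%:R : R) <= 8%:R.
Proof.
rewrite -ler_expR lnK ?posrE // (_ : 8%:R = 4%:R * 2) ?expRM_natl; last by rewrite -natrM.
apply: le_trans (_ : 3%:R ^+ 4 <= _); first by rewrite -natrX ler_nat.
by rewrite lerXn2r ?nnegrE ?expR_ge0 ?expR2_ge3.
Qed.

(* 7 d = 56 (D / g) (g d / (8 D)), and ln w <= w. *)
Lemma ln_depth_le (D d : nat) (g : R) : (0 < D)%N -> (0 < d)%N -> 0 < g ->
  ln (7%:R * d%:R) <= 8%:R + ln (g^-1 * D%:R) + g * d%:R / (8%:R * D%:R).
Proof.
move=> D_gt0 d_gt0 g_gt0.
have D0 : 0 < D%:R :> R by rewrite ltr0n.
have d0 : 0 < d%:R :> R by rewrite ltr0n.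
have c0 : 0 < g^-1 * D%:R by rewrite mulr_gt0 ?invr_gt0.
have w0 : 0 < g * d%:R / (8%:R * D%:R) by rewrite divr_gt0 ?mulr_gt0.
rewrite (_ : 7%:R * d%:R = 56%:R * (g^-1 * D%:R) * (g * d%:R / (8%:R * D%:R))); last first.
  by field; rewrite !gt_eqF.
have c56 : 0 < 56%:R * (g^-1 * D%:R) :> R by rewrite mulr_gt0.
rewrite lnM ?posrE // [ln (56%:R * _)]lnM ?posrE //.
by have := ln_56_le; have := ln_sublinear w0; lra.
Qed.

Lemma noise_le_expR (D d : nat) (g : R) : (0 < d)%N -> g <= 1 ->
  3%:R * theta R D ^+ (2 * 3 ^ D) * (1 - g) ^+ d * ((6 * d).+1 ^ D)%:R
  <= expR (2 + (2 * 3 ^ D)%:R * (4 * D + 2)%:R - g * d%:R + D%:R * ln (7%:R * d%:R)).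
Proof.
move=> d_gt0 g1; set M := (2 * 3 ^ D)%N; rewrite 3!expRD.
have th0 : 0 <= theta R D by apply: le_trans (theta_ge1 R D).
have theta_le : theta R D ^+ M <= expR (M%:R * (4 * D + 2)%:R).
  by rewrite expRM_natl lerXn2r ?nnegrE ?expR_ge0 ?theta_le_expR.
have box_le : ((6 * d).+1 ^ D)%:R <= expR (D%:R * ln (7%:R * d%:R)) :> R.
  rewrite expRM_natl lnK ?posrE ?mulr_gt0 ?ltr0n // natrX lerXn2r ?nnegrE ?mulr_ge0 //.
  by rewrite -natrM ler_nat; lia.
have noise0 : 0 <= (1 - g) ^+ d by rewrite exprn_ge0 // subr_ge0.
have thM0 : 0 <= theta R D ^+ M by rewrite exprn_ge0.
apply: (ler_pM _ _ _ box_le) => //; first by rewrite !mulr_ge0.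
apply: (ler_pM _ _ _ (pow1B_le_expR d g1)) => //; first by rewrite mulr_ge0.
exact: (ler_pM _ _ expR2_ge3 theta_le).
Qed.

Lemma ln_ratio_ge0 (D : nat) (g : R) : (1 <= D)%N -> 0 < g <= 1 ->
  0 <= ln (g^-1 * D%:R).
Proof.
move=> D_gt0 /andP [g0 g1]; apply: ln_ge0; rewrite -[X in X <= _](mulr1 1).
by apply: ler_pM; rewrite ?ler01 ?invf_ge1 ?ler1n.
Qed.

Lemma depth_exponent_le (D d : nat) (g : R) : (1 <= D)%N -> (0 < d)%N -> 0 < g <= 1 ->
  32%:R * (3%:R ^+ (2 * D) + D%:R * ln (g^-1 * D%:R)) < g * d%:R ->
  2 + (2 * 3 ^ D)%:R * (4 * D + 2)%:R - g * d%:R + D%:R * ln (7%:R * d%:R) <= 0.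
Proof.
move=> D_gt0 d_gt0 g01; have /andP [g0 _] := g01.
have := ln_ratio_ge0 D_gt0 g01.
set t : R := 3%:R ^+ D; set lam := ln (g^-1 * D%:R); set a := g * d%:R => lam0.
have Dlam0 : 0 <= D%:R * lam by rewrite mulr_ge0.
have -> : 3%:R ^+ (2 * D) = t * t :> R by rewrite mulnC exprM expr2.
have t1 : 1 <= t by rewrite exprn_ege1 // ler1n.
have tD : D%:R <= t by rewrite /t -natrX ler_nat ltnW // ltn_expl.
have tDt : t * D%:R <= t * t by rewrite ler_wpM2l // (le_trans ler01).
have tt : t <= t * t by rewrite ler_peMr // (le_trans ler01).
have ln_le : D%:R * ln (7%:R * d%:R) <= 8%:R * D%:R + D%:R * lam + a / 8%:R.
  have D0 : 0 < D%:R :> R by rewrite ltr0n.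
  have -> : 8%:R * D%:R + D%:R * lam + a / 8%:R
      = D%:R * (8%:R + lam + a / (8%:R * D%:R)) by field; rewrite gt_eqF.
  by apply: ler_wpM2l; [apply: ltW | apply: ln_depth_le].
have -> : (2 * 3 ^ D)%:R * (4 * D + 2)%:R = 8%:R * (t * D%:R) + 4%:R * t :> R.
  by rewrite natrM natrX -/t natrD natrM; ring.
by move=> large_a; move: ln_le; lra.
Qed.

Lemma depth_threshold (D d : nat) (g : R) : (1 <= D)%N -> 0 < g < 1 ->
  32%:R * (g^-1 * 3%:R ^+ (2 * D) + g^-1 * D%:R * ln (g^-1 * D%:R)) < d%:R ->
  (0 < d)%N /\
  3%:R * theta R D ^+ (2 * 3 ^ D) * (1 - g) ^+ d * ((6 * d).+1 ^ D)%:R <= 1.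
Proof.
move=> D_gt0 /andP [g0 g1] large_d.
have g01 : 0 < g <= 1 by rewrite g0 ltW.
have lam0 := ln_ratio_ge0 D_gt0 g01.
have large_a : 32%:R * (3%:R ^+ (2 * D) + D%:R * ln (g^-1 * D%:R)) < g * d%:R.
  have -> : 32%:R * (3%:R ^+ (2 * D) + D%:R * ln (g^-1 * D%:R))
      = g * (32%:R * (g^-1 * 3%:R ^+ (2 * D) + g^-1 * D%:R * ln (g^-1 * D%:R))).
    by field; rewrite gt_eqF.
  by rewrite ltr_pM2l.
have d_gt0 : (0 < d)%N.
  rewrite -(ltr0n R) -(pmulr_rgt0 _ g0); apply: le_lt_trans large_a.
  by rewrite mulr_ge0 ?addr_ge0 ?mulr_ge0 ?exprn_ge0.
split => //; apply: le_trans (noise_le_expR D d_gt0 (ltW g1)) _.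
by rewrite expR_le1 (depth_exponent_le D_gt0 d_gt0 g01 large_a).
Qed.

End Threshold.

Lemma card_fibred_set (T : finType) d (A : 'I_d -> {set T}) :
  #|[set l : T * 'I_d | l.1 \in A l.2]| = (\sum_(t : 'I_d) #|A t|)%N.
Proof.
rewrite -sum1_card big_mkcond /=.
rewrite (eq_bigr (fun l => if l.1 \in A l.2 then 1 else 0)%N) => [|l _]; last by rewrite inE.
rewrite -(pair_bigA _ (fun i t => if i \in A t then 1 else 0)%N) exchange_big /=.
by apply: eq_bigr => t _; rewrite -sum1_card [RHS]big_mkcond.
Qed.

Section Survival.
Variables (D L d : nat) (Us : seq (layer D L)).
Hypothesis size_Us : size Us = d.
Hypothesis ok_Us : all (@layer_ok D L) Us.
Local Notation site := (site D L).
Local Notation pauli := (pauli D L).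
Local Notation p0 := (false, false).

Section Layer.
Variable t : 'I_d.

Let ok_take : all (@layer_ok D L) (take t.+1 Us).
Proof. by move: ok_Us; rewrite -{1}(cat_take_drop t.+1 Us) all_cat => /andP []. Qed.

Let size_take : (size (take t.+1 Us) <= d)%N.
Proof. by rewrite size_take_min size_Us geq_minr. Qed.

Lemma heis_inj : injective (heis Us t.+1).
Proof. by rewrite heisE; apply: circuit_heis_inj ok_take. Qed.

Lemma heis_commute (s u : pauli) :
  commute (heis Us t.+1 s) (heis Us t.+1 u) = commute s u.
Proof. by rewrite heisE circuit_heis_commute. Qed.

Lemma heis_support (P : pauli) y : heis Us t.+1 P y != p0 ->
  exists2 z, P z != p0 & nearby d z y.
Proof.
rewrite heisE => /(circuit_heis_support ok_take) [z Pz zy].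
by exists z => //; apply: nearby_le size_take zy.
Qed.

Lemma support_heis (u : pauli) z : u z != p0 ->
  exists2 y, heis Us t.+1 u y != p0 & nearby d z y.
Proof.
rewrite heisE => /(support_circuit_heis ok_take) [y uy zy].
by exists y => //; apply: nearby_le size_take zy.
Qed.

End Layer.

Definition heis_inv (t : 'I_d) := invF (@heis_inj t).

(* The locations (i, t) at which an error anticommutes with s: those where i
   lies in the support of s pulled back through the first t + 1 layers. *)
Definition fatal_locs (s : pauli) : {set site * 'I_d} :=
  [set l : site * 'I_d | l.1 \in support (heis_inv l.2 s)].

Lemma Pi_M_disjoint_fatal (b : {set site * 'I_d}) (s : pauli) :
  Pi_M (M_b Us b) s != None -> [disjoint b & fatal_locs s].
Proof.
rewrite /Pi_M; case: ifP => // /forall_inP s_comm _.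
apply/pred0P => [[i t]] /=; apply/negbTE/negP => /andP [it_b].
rewrite !inE /=; set u := heis_inv t s.
have su : s = heis Us t.+1 u by rewrite /u /heis_inv f_invF.
have inMX : heis Us t.+1 (pX i) \in M_b Us b.
  by rewrite inE; apply/exists_inP; exists (i, t); rewrite //= eqxx.
have inMZ : heis Us t.+1 (pZ i) \in M_b Us b.
  by rewrite inE; apply/exists_inP; exists (i, t); rewrite //= eqxx orbT.
move: (s_comm _ inMX) (s_comm _ inMZ).
rewrite su !heis_commute commute_pX commute_pZ.
by case: (u i) => [[] []].
Qed.

Variable R : realType.
Variable g : R.
Hypothesis g01 : 0 <= g <= 1.

Lemma prob_survive_le k :
  prob_b g (fun b : {set site * 'I_d} =>
    [exists s : pauli, in_T d k s && (Pi_M (M_b Us b) s != None)])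
  <= \sum_(s : pauli) (if in_T d k s then (1 - g) ^+ #|fatal_locs s| else 0).
Proof.
case/andP: g01 => g0 g1.
set w := fun b : {set site * 'I_d} => g ^+ #|b| * (1 - g) ^+ (#|{: site}| * d - #|b|).
have w0 b : 0 <= w b by rewrite /w mulr_ge0 ?exprn_ge0 ?subr_ge0.
apply: le_trans (_ : \sum_(b : {set site * 'I_d}) \sum_(s : pauli)
  (if in_T d k s && [disjoint b & fatal_locs s] then w b else 0) <= _).
  apply: ler_sum => b _; case: ifP => [/existsP [s /andP [sT sP]]|_]; last first.
    by apply: sumr_ge0 => s _; case: ifP.
  rewrite (bigD1 s) //= sT Pi_M_disjoint_fatal //; apply: ler_wpDr => //.
  by apply: sumr_ge0 => s' _; case: ifP.
rewrite exchange_big /=; apply: ler_sum => s _.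
case: ifP => _ /=; last by rewrite big1.
have cardT : #|{: site * 'I_d}| = (#|{: site}| * d)%N by rewrite card_prod card_ord.
by rewrite -(sum_bernoulli_disjoint g (fatal_locs s)) cardT.
Qed.

Hypothesis d_gt0 : (0 < d)%N.

Lemma pow_fatal_le (s : pauli) :
  (1 - g) ^+ #|fatal_locs s|
  <= \sum_(t : 'I_d) ((1 - g) ^+ d) ^+ #|support (heis_inv t s)|.
Proof.
case/andP: g01 => g0 g1.
rewrite /fatal_locs (card_fibred_set (fun t => support (heis_inv t s))).
set a := fun t : 'I_d => #|support (heis_inv t s)|.
have [t0 _ min_t0] := @arg_minnP _ (Ordinal d_gt0) xpredT a isT.
have sum_ge : (d * a t0 <= \sum_(t : 'I_d) a t)%N.
  apply: leq_trans (_ : (\sum_(t : 'I_d) a t0 <= _)%N); first by rewrite sum_nat_const card_ord.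
  by apply: leq_sum => t _; apply: min_t0.
apply: le_trans (ler_wiXn2l _ _ sum_ge) _; rewrite ?subr_ge0 ?lerBlDr ?lerDl //.
rewrite exprM (bigD1 t0) //= ler_wpDr //.
by apply: sumr_ge0 => t _; rewrite exprn_ge0 // exprn_ge0 // subr_ge0.
Qed.

Lemma prob_survive_bound k : (0 < k)%N ->
  3%:R * theta R D ^+ (2 * 3 ^ D) * (1 - g) ^+ d * ((6 * d).+1 ^ D)%:R <= 1 ->
  prob_b g (fun b : {set site * 'I_d} =>
    [exists s : pauli, in_T d k s && (Pi_M (M_b Us b) s != None)])
  <= (#|{: site}| * d)%:R * expR (- k%:R).
Proof.
move=> k_gt0 small_x; apply: le_trans (prob_survive_le k) _.
set x := (1 - g) ^+ d.
have x0 : 0 <= x by case/andP: g01 => _ g1; rewrite exprn_ge0 // subr_ge0.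
apply: le_trans (_ : \sum_(s : pauli) \sum_(t : 'I_d)
  (if in_T d k s then x ^+ #|support (heis_inv t s)| else 0) <= _).
  by apply: ler_sum => s _; case: ifP => _; [apply: pow_fatal_le | rewrite big1].
rewrite exchange_big /=.
apply: le_trans (_ : \sum_(t : 'I_d) #|{: site}|%:R * expR (- k%:R) <= _); last first.
  by rewrite sumr_const card_ord natrM mulrAC mulr_natr.
apply: ler_sum => t _.
rewrite (reindex_inj (@heis_inj t)) /=.
under eq_bigr do rewrite /heis_inv invF_f.
exact: (sum_in_T_le d_gt0 (@heis_support t) (@support_heis t)).
Qed.

End Survival.

Theorem lemma8 :
  forall R : realType, exists c : R, 0 < c /\
  forall (D : nat) (gamma : R), (1 <= D)%N -> 0 < gamma < 1 ->
  exists dstar : R,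
    dstar <= c * (gamma^-1 * 3 ^+ (2 * D)
                  + gamma^-1 * D%:R * ln (gamma^-1 * D%:R)) /\
    forall (L d : nat) (Us : seq (layer D L)),
      size Us = d -> all (@layer_ok D L) Us -> dstar < d%:R ->
      forall k : nat, (1 <= k)%N ->
        prob_b gamma
          (fun b : {set site D L * 'I_d} =>
             [exists s : pauli D L, in_T d k s && (Pi_M (M_b Us b) s != None)])
        <= (#|site D L| * d)%:R * expR (- k%:R).
Proof.
move=> R; exists 32%:R; split; first by rewrite ltr0n.
move=> D g D_gt0 g01.
exists (32%:R * (g^-1 * 3 ^+ (2 * D) + g^-1 * D%:R * ln (g^-1 * D%:R))); split => //.
move=> L d Us size_Us ok_Us large_d k k_gt0.
have [d_gt0 small_noise] := depth_threshold D_gt0 g01 large_d.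
have g01' : 0 <= g <= 1 by case/andP: g01 => g0 g1; rewrite !ltW.
exact: (prob_survive_bound size_Us ok_Us g01' d_gt0 k_gt0 small_noise).
Qed.
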